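(* Let $m,n\ge4$, let $\omega$ be a weight order on $\mathbb{K}[y_S]$ and let $F$ be a Gröbner basis of $I_{P_n}$ with respect to $\omega$. If every element of $F$ is weakly $Q_{m,n}$-homogeneous with respect to $\omega$, then for every binomial in $F$ of the form $y_{\emptyset}y_{S_2}\cdots y_{S_k}-y_{T_1}y_{T_2}\cdots y_{T_k}$ with $T_i\neq\emptyset$ for all $i$, it holds that $y_{T_1}y_{T_2}\cdots y_{T_k}\le_\omega y_\emptyset y_{S_2}\cdots y_{S_k}$.
   Context: A DAG's v-structure is $i\to k\leftarrow j$ with $i,j$ non-adjacent; Markov equivalence classes of DAGs with a given skeleton are determined by their v-structures, and for an undirected graph $G$ the characteristic imset ideal $I_G$ is the kernel of the map sending the variable of a class to $\prod_{S:c(S)=1}t_S$, where $c(S)=1$ iff some $i\in S$ has $S\setminus\{i\}\subseteq\mathrm{pa}(i)$ in a DAG of the class. $P_n$ is the path $1-2-\cdots-n$; its classes are indexed by collider sets $S\subseteq\{2,\dots,n-1\}$ with no two consecutive integers, giving variables $y_S$. With $N=n+m-4$, $P'_m$ is the path $n-1,n,\dots,N,1,2$; its classes are indexed by sets $S'$ of interior vertices (among $n,\dots,N,1$) with no two consecutive along the path. $Q_{m,n}$ is the set of pairs $(S',S)$ of such collider sets with no two elements of $S'\cup S$ cyclically consecutive modulo $N$ and $S'\cup S\ne\emptyset$. A polynomial $f\in\mathbb{K}[y_S]$ homogeneous of degree $d$ with $\omega$-leading monomial $y_{S_1}\cdots y_{S_d}$ is weakly $Q_{m,n}$-homogeneous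 w.r.t. $\omega$ if for every monomial $y_{T_1}\cdots y_{T_d}$ of $f$ there is a permutation $\sigma$ of $[d]$ with $\{(S'_1,\dots,S'_d):(S'_\ell,S_\ell)\in Q_{m,n}\ \forall\ell\}\subseteq\{(S'_1,\dots,S'_d):(S'_\ell,T_{\sigma(\ell)})\in Q_{m,n}\ \forall\ell\}$. *)

From HB Require Import structures.
From mathcomp Require Import all_boot all_order all_algebra all_fingroup.
From mathcomp Require Import mpoly.

Set Implicit Arguments.
Unset Strict Implicit.
Unset Printing Implicit Defensive.

Import Order.TTheory GRing.Theory Num.Theory.
Local Open Scope ring_scope.

(* Vertices of the path P_n are 1, ..., n, encoded as the nonzero     *)
(* elements of 'I_n.+1 (the element 0 is a dummy, never a vertex).    *)

(* A DAG with skeleton P_n : o j = true means the edge j - (j+1) is    *)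
(* oriented j -> j+1, and false means j+1 -> j (1 <= j <= n-1).        *)
(* (Every orientation of a path is acyclic.)                           *)
Definition orientation (n : nat) := {ffun 'I_n.+1 -> bool}.

Definition par (n : nat) (o : orientation n) (j i : 'I_n.+1) : bool :=
  [&& (0 < j)%N, (0 < i)%N &
      (((j.+1 == i :> nat) && o j) || ((i.+1 == j :> nat) && ~~ o i))].

Definition adjP (n : nat) (a b : 'I_n.+1) : bool :=
  [&& (0 < a)%N, (0 < b)%N & (a.+1 == b :> nat) || (b.+1 == a :> nat)].

Definition collider (n : nat) (o : orientation n) (i : 'I_n.+1) : bool :=
  [exists j1, exists j2,
     [&& j1 != j2, par o j1 i, par o j2 i & ~~ adjP j1 j2]].

Definition valid_coll (n : nat) (S : {set 'I_n.+1}) : bool :=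
  [forall i in S, (2 <= i <= n.-1)%N] &&
  [forall i in S, forall j in S, (i.+1 != j :> nat)].

Definition cset (n : nat) := {S : {set 'I_n.+1} | @valid_coll n S}.

Lemma valid_coll0 n : @valid_coll n set0.
Proof. by apply/andP; split; apply/forallP => i; rewrite in_set0. Qed.

Definition cset0 (n : nat) : cset n := exist _ set0 (@valid_coll0 n).

(* The characteristic imset of the Markov equivalence class with collider
   set S:  c_S(T) = 1 iff T is a set of vertices and, in some DAG of the
   class (i.e. some orientation whose v-structures are exactly those
   centred at S), some i in T has T \ {i} included in pa(i). *)
Definition cimset (n : nat) (S : cset n) (T : {set 'I_n.+1}) : bool :=
  [forall i in T, (0 < i)%N] &&
  [exists o : orientation n,
     [forall i : 'I_n.+1, (0 < i)%N ==> (collider o i == (i \in val S))] &&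
     [exists i in T, [forall j in T, (j != i) ==> par o j i]]].

Definition nY (n : nat) := #|{: cset n}|.
Definition nT (n : nat) := #|{: {set 'I_n.+1}}|.

Definition imset_mono (K : fieldType) (n : nat) (S : cset n) : {mpoly K[nT n]} :=
  \prod_(T : {set 'I_n.+1} | cimset S T) 'X_(enum_rank T).

Definition I_P (K : fieldType) (n : nat) : pred {mpoly K[nY n]} :=
  fun g => mmap (fun c : K => c%:MP_[nT n]) (fun i : 'I_(nY n) => imset_mono K (enum_val i)) g == 0.

Definition ymono (n d : nat) (s : 'I_d -> cset n) : 'X_{1..nY n} :=
  (\sum_(l < d) U_(enum_rank (s l)))%MM.

Definition monomial_order (k : nat) (le : rel 'X_{1..k}) : Prop :=
  [/\ total le, antisymmetric le, transitive le,
      (forall m, le 0%MM m) &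
      (forall m1 m2 m, le m1 m2 -> le (m1 + m)%MM (m2 + m)%MM)].

Definition wdeg (R : realFieldType) (k : nat) (w : 'I_k -> R) (m : 'X_{1..k}) : R :=
  \sum_(i < k) w i * (m i)%:R.

Definition wle (R : realFieldType) (k : nat) (w : 'I_k -> R) (tau : rel 'X_{1..k})
  : rel 'X_{1..k} :=
  fun m1 m2 => (wdeg w m1 < wdeg w m2) || ((wdeg w m1 == wdeg w m2) && tau m1 m2).

Definition is_lead (K : fieldType) (k : nat) (le : rel 'X_{1..k})
  (f : {mpoly K[k]}) (m : 'X_{1..k}) : Prop :=
  m \in msupp f /\ forall m', m' \in msupp f -> le m' m.

Definition groebner_basis (K : fieldType) (k : nat) (le : rel 'X_{1..k})
  (I : pred {mpoly K[k]}) (F : seq {mpoly K[k]}) : Prop :=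
  (forall f, f \in F -> I f) /\
  (forall g, I g -> g != 0 ->
     exists2 f, f \in F &
       exists mf mg, [/\ is_lead le f mf, is_lead le g mg & (mf <= mg)%MM]).

(* The path P'_m : n-1, n, ..., N, 1, 2 with N = n + m - 4, on the     *)
(* vertices 1..N (as nonzero elements of 'I_N.+1).                     *)

Definition bigN (m n : nat) := (n + m - 4)%N.

Definition interiorP' (m n : nat) (i : nat) : bool :=
  ((n <= i <= bigN m n)%N) || (i == 1%N).

Definition consecP' (m n : nat) (a b : nat) : bool :=
  [|| (n.-1 <= a)%N && (a < bigN m n)%N && (b == a.+1),
      (a == bigN m n) && (b == 1%N) | (a == 1%N) && (b == 2%N)].

Definition valid_coll' (m n : nat) (S : {set 'I_(bigN m n).+1}) : bool :=
  [forall i in S, interiorP' m n i] &&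
  [forall i in S, forall j in S, ~~ consecP' m n i j].

Definition cset' (m n : nat) := {S : {set 'I_(bigN m n).+1} | @valid_coll' m n S}.

Definition Qmn (m n : nat) (S' : cset' m n) (S : cset n) : bool :=
  let U := [seq val x | x in val S'] ++ [seq val x | x in val S] in
  all (fun a : nat => all (fun b : nat =>
     (a.+1 %% bigN m n != b %% bigN m n)%N) U) U && (U != [::]).

(* weakly Q_{m,n}-homogeneous w.r.t. the order le (f = 0 accepted
   vacuously, as it has no leading monomial) *)
Definition weakly_Qhom (K : fieldType) (m n : nat) (le : rel 'X_{1..nY n})
  (f : {mpoly K[nY n]}) : Prop :=
  f = 0 \/
  exists d (s : 'I_d -> cset n),
    [/\ f \is d.-homog, is_lead le f (ymono s) &
        forall t : 'I_d -> cset n, ymono t \in msupp f ->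
          exists sigma : 'S_d,
            forall S' : 'I_d -> cset' m n,
              (forall l, Qmn (S' l) (s l)) ->
              (forall l, Qmn (S' l) (t (sigma l)))].

(* If the leading monomial of the binomial were y_{T_1} ... y_{T_k}, weak
   Q_{m,n}-homogeneity would give a permutation sigma such that every choice
   of S'_l with (S'_l, T_l) in Q_{m,n} also satisfies (S'_l, S_{sigma l}) in
   Q_{m,n}.  Choose S'_l = \emptyset for all l: since T_l is a nonempty subset
   of {2, ..., n-1} without consecutive elements and n - 1 < N, it has no
   cyclically consecutive elements modulo N, so (\emptyset, T_l) is in Q_{m,n}.
   But the factor y_\emptyset of the other monomial would then need
   (\emptyset, \emptyset) in Q_{m,n}, which is excluded. *)

From HB Require Import structures.
From mathcomp Require Import all_boot all_order all_algebra all_fingroup.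
From mathcomp Require Import mpoly zify.
Import GRing.Theory Num.Theory.
Local Open Scope ring_scope.

Lemma msupp_binomial (R : nzRingType) (k : nat) (m1 m2 : 'X_{1..k}) :
  m1 != m2 -> msupp ('X_[m1] - 'X_[m2] : {mpoly R[k]}) =i [:: m1; m2].
Proof.
move=> m12 m; rewrite !inE mcoeff_msupp mcoeffB !mcoeffX.
have [->|m1m] := eqVneq m m1.
  by rewrite (eq_sym m2) (negbTE m12) mulr0n mulr1n subr0 oner_eq0.
rewrite sub0r oppr_eq0 (eq_sym m2).
by case: (m == m2); rewrite ?mulr1n ?mulr0n ?oner_eq0 ?eqxx.
Qed.

Lemma ymono_gt0 (n d : nat) (s : 'I_d -> cset n) (S : cset n) :
  (0 < ymono s (enum_rank S))%N = (S \in codom s).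
Proof.
rewrite /ymono mnm_sumE lt0n sum_nat_eq0 negb_forall. apply/existsP/codomP => [[l]|[l ->]].
  by rewrite mnm1E (inj_eq enum_rank_inj); case: (s l =P S) => // <- _; exists l.
by exists l; rewrite mnm1E eqxx.
Qed.

Lemma mdeg_ymono (n d : nat) (s : 'I_d -> cset n) : mdeg (ymono s) = d.
Proof.
rewrite /ymono mdeg_sum (eq_bigr (fun=> 1%N)) => [|l _]; last exact: mdeg1.
by rewrite sum_nat_const card_ord muln1.
Qed.

Lemma valid_coll'0 (m n : nat) : @valid_coll' m n set0.
Proof. by apply/andP; split; apply/forallP => i; rewrite in_set0. Qed.

Definition cset'0 (m n : nat) : cset' m n := exist _ set0 (@valid_coll'0 m n).

Lemma valid_coll_cyclic (n N : nat) (S : {set 'I_n.+1}) (x y : 'I_n.+1) :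
  (n <= N)%N -> valid_coll S -> x \in S -> y \in S -> (x.+1 %% N != y %% N)%N.
Proof.
move=> nN /andP[/forallP S_int /forallP S_sep] xS yS.
have := S_int x; have := S_int y; rewrite xS yS /= => /andP[y2 yn] /andP[x2 xn].
have /forall_inP/(_ y yS) xy := implyP (S_sep x) xS.
rewrite (@modn_small y); last by lia.
have [xN|] := ltnP x.+1 N; first by rewrite modn_small.
move=> Nx; have -> : x.+1 = N by lia.
by rewrite modnn eq_sym -lt0n; lia.
Qed.

Lemma image_set0 (T : finType) (T' : Type) (f : T -> T') :
  [seq f x | x in (set0 : {set T})] = [::].
Proof. by rewrite /image_mem enum_set0. Qed.

Lemma Qmn_cset'0 (m n : nat) (S : cset n) :
  (4 <= m)%N -> Qmn (cset'0 m n) S = (S != cset0 n).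
Proof.
move=> m4; rewrite /Qmn /= image_set0 -size_eq0 size_image cards_eq0.
have [->|S_ne0] := eqVneq S (cset0 n); first by rewrite /= eqxx andbF.
have -> : val S != set0 by rewrite -val_eqE in S_ne0.
rewrite andbT; apply/allP => a /mapP[x]; rewrite mem_enum => xS ->.
apply/allP => b /mapP[y]; rewrite mem_enum => yS ->.
by apply: valid_coll_cyclic (valP S) xS yS; rewrite /bigN; lia.
Qed.

Lemma Qmn_dominated_cset0 {m n d : nat} {s u : 'I_d -> cset n} {sigma : 'S_d} :
  (4 <= m)%N ->
  (forall S' : 'I_d -> cset' m n,
     (forall l, Qmn (S' l) (s l)) -> forall l, Qmn (S' l) (u (sigma l))) ->
  cset0 n \in codom u -> cset0 n \in codom s.
Proof.
move=> m4 dom /codomP[l0 u_l0]; apply: contraT => s_ne0.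
have := dom (fun=> cset'0 m n) _ (sigma^-1 l0)%g.
rewrite permKV -u_l0 Qmn_cset'0 // eqxx; apply=> l.
by rewrite Qmn_cset'0 //; apply: contraNneq s_ne0 => <-; apply: codom_f.
Qed.

Theorem lemma5p2 (K : fieldType) (R : realFieldType) (m n : nat)
  (hm : (4 <= m)%N) (hn : (4 <= n)%N)
  (w : 'I_(nY n) -> R) (tau : rel 'X_{1..nY n}) (htau : monomial_order tau)
  (F : seq {mpoly K[nY n]})
  (hGB : groebner_basis (wle w tau) (@I_P K n) F)
  (hQ : forall f, f \in F -> @weakly_Qhom K m n (wle w tau) f)
  (k : nat) (s t : 'I_k.+1 -> cset n)
  (hs0 : s ord0 = cset0 n) (ht : forall l, t l != cset0 n)
  (hin : 'X_[ymono s] - 'X_[ymono t] \in F) :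
  wle w tau (ymono t) (ymono s).
Proof.
have s_0 : cset0 n \in codom s by rewrite -hs0 codom_f.
have t_0 : cset0 n \notin codom t.
  by apply/codomP => -[l t_l]; move: (ht l); rewrite -t_l eqxx.
have s_ne_t : ymono s != ymono t.
  by apply: contraTneq s_0 => st; rewrite -ymono_gt0 st ymono_gt0.
have supp_st := @msupp_binomial K _ _ _ s_ne_t.
have s_supp : ymono s \in msupp ('X_[ymono s] - 'X_[ymono t] : {mpoly K[nY n]}).
  by rewrite supp_st mem_head.
case: (hQ _ hin) => [f0 | [d [v [f_hom [lead_supp lead_max] dom]]]].
  by move: s_supp; rewrite f0 msupp0.
move: lead_supp; rewrite supp_st !inE => /orP[/eqP <- | /eqP v_t].
  by apply: lead_max; rewrite supp_st !inE eqxx orbT.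
have d_k : d = k.+1 by rewrite -(dhomog_mf f_hom s_supp) /= mdeg_ymono.
subst d; have [sigma dom_s] := dom s s_supp.
have := Qmn_dominated_cset0 hm dom_s s_0.
by rewrite -ymono_gt0 v_t ymono_gt0 (negbTE t_0).
Qed.
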